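(* Let $\mathbb{R}_0=\{x\in\mathbb{R}: x\ge 0\}$ and let $\widetilde{U}:\mathbb{R}_0\to\mathbb{R}_0$ be defined by \[ \widetilde{U}(x)=\begin{cases} \dfrac{3x+1}{2} & \text{if } \lfloor x\rfloor \text{ is even},\\[4pt] \dfrac{x}{2} & \text{if } \lfloor x\rfloor \text{ is odd}.\end{cases}\] Then there are no $\widetilde{U}$-cycles: there is no $x\in\mathbb{R}_0$ and no integer $k\ge 1$ with $\widetilde{U}^k(x)=x$.
   Context: $\lfloor x\rfloor$ denotes the largest integer $\le x$. For a function $f:X\to X$, $f^0$ is the identity and $f^i=f\circ f^{i-1}$. An $f$-cycle is the trajectory of a point $z$ with $f^n(z)=z$ for some $n\ge 1$. *)

From Stdlib Require Import Reals ZArith.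
Open Scope R_scope.

(* floor x = largest integer <= x ; Stdlib's [up x] is the unique integer with
   x < up x <= x + 1, hence floor x = up x - 1. *)
Definition floorR (x : R) : Z := (up x - 1)%Z.

(* The map U~ on R_0 (defined on all of R; only used on x >= 0). *)
Definition Ut (x : R) : R :=
  if Z.even (floorR x) then (3 * x + 1) / 2 else x / 2.

Fixpoint iterR (k : nat) (f : R -> R) (x : R) : R :=
  match k with
  | O => x
  | S k' => f (iterR k' f x)
  end.

(* A Lyapunov argument.  Let g x := ceil(x) - x, taken in (0, 1] (so g x = 1 at
   integers), and L x := (2x + 1) / g x.  On each branch U~ is an affine map
   y = a x + b (a > 0) sending the integer just above x to an integer, so
   g (U~ x) <= a g x.  Since 2 U~ x + 1 exceeds a (2x + 1) (by 1/2 on both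
   branches), L strictly increases along every orbit in R_0, which rules out
   cycles. *)
From Stdlib Require Import Reals ZArith Lra Lia Psatz.
Open Scope R_scope.

Section StrictLyapunov.

Variables (f : R -> R) (P : R -> Prop) (L : R -> R).
Hypothesis f_stable : forall x, P x -> P (f x).
Hypothesis L_increasing : forall x, P x -> L x < L (f x).

Lemma iterR_stable k x : P x -> P (iterR k f x).
Proof. intros Hx; induction k as [|k IH]; simpl; auto. Qed.

Lemma L_iterR_lt k x : P x -> L x < L (iterR (S k) f x).
Proof.
  intros Hx; induction k as [|k IH]; simpl in *.
  - now apply L_increasing.
  - pose proof (L_increasing _ (iterR_stable (S k) x Hx)); simpl in *; lra.
Qed.

Lemma no_cycle_of_strict_lyapunov x k :
  P x -> (1 <= k)%nat -> iterR k f x <> x.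
Proof.
  intros Hx Hk Hcyc; destruct k as [|k]; [lia|].
  pose proof (L_iterR_lt k x Hx) as HL; rewrite Hcyc in HL; lra.
Qed.

End StrictLyapunov.

(* [up x] is the least integer strictly above [x], so this is ceil x - x
   except at integers, where it is 1 rather than 0. *)
Definition ceil_gap (x : R) : R := IZR (up x) - x.

Lemma ceil_gap_pos x : 0 < ceil_gap x.
Proof. unfold ceil_gap; destruct (archimed x); lra. Qed.

Lemma up_le_IZR (y : R) (m : Z) : y < IZR m -> (up y <= m)%Z.
Proof.
  intros Hy; destruct (archimed y) as [_ Hup].
  assert (IZR (up y) < IZR (m + 1)) by (rewrite plus_IZR; lra).
  apply lt_IZR in H; lia.
Qed.

Lemma ceil_gap_affine (a b x : R) (m : Z) :
  0 < a -> a * IZR (up x) + b = IZR m ->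
  ceil_gap (a * x + b) <= a * ceil_gap x.
Proof.
  intros Ha Hm; pose proof (ceil_gap_pos x) as Hg; unfold ceil_gap in *.
  assert (Hup : (up (a * x + b) <= m)%Z) by (apply up_le_IZR; nra).
  apply IZR_le in Hup; lra.
Qed.

Lemma up_floorR x : up x = (floorR x + 1)%Z.
Proof. unfold floorR; lia. Qed.

Lemma ceil_gap_Ut_even x :
  Z.even (floorR x) = true -> ceil_gap (Ut x) <= 3 / 2 * ceil_gap x.
Proof.
  intros He; unfold Ut; rewrite He.
  apply Z.even_spec in He as [j Hj].
  replace ((3 * x + 1) / 2) with (3 / 2 * x + 1 / 2) by field.
  apply (ceil_gap_affine _ _ _ (3 * j + 2)); [lra|].
  rewrite up_floorR, Hj, plus_IZR, mult_IZR, plus_IZR, mult_IZR; simpl; lra.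
Qed.

Lemma ceil_gap_Ut_odd x :
  Z.even (floorR x) = false -> ceil_gap (Ut x) <= 1 / 2 * ceil_gap x.
Proof.
  intros He; unfold Ut; rewrite He.
  assert (Ho : Z.odd (floorR x) = true) by now rewrite <- Z.negb_even, He.
  apply Z.odd_spec in Ho as [j Hj].
  replace (x / 2) with (1 / 2 * x + 0) by field.
  apply (ceil_gap_affine _ _ _ (j + 1)); [lra|].
  rewrite up_floorR, Hj, !plus_IZR, mult_IZR; simpl; lra.
Qed.

Lemma Ut_nonneg x : 0 <= x -> 0 <= Ut x.
Proof. intros Hx; unfold Ut; destruct (Z.even (floorR x)); lra. Qed.

Definition lyap (x : R) : R := (2 * x + 1) / ceil_gap x.

Lemma lyap_Ut_lt x : 0 <= x -> lyap x < lyap (Ut x).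
Proof.
  intros Hx; unfold lyap.
  pose proof (ceil_gap_pos x) as Hg; pose proof (ceil_gap_pos (Ut x)) as HgU.
  apply (Rmult_lt_reg_r (ceil_gap x * ceil_gap (Ut x))); [nra|].
  field_simplify; try lra.
  destruct (Z.even (floorR x)) eqn:He.
  - pose proof (ceil_gap_Ut_even x He).
    unfold Ut in *; rewrite He in *; nra.
  - pose proof (ceil_gap_Ut_odd x He).
    unfold Ut in *; rewrite He in *; nra.
Qed.

Theorem theorem2 :
  ~ exists (x : R) (k : nat), 0 <= x /\ (1 <= k)%nat /\ iterR k Ut x = x.
Proof.
  intros [x [k [Hx [Hk Hcyc]]]].
  exact (no_cycle_of_strict_lyapunov Ut (fun y => 0 <= y) lyap
           Ut_nonneg lyap_Ut_lt x k Hx Hk Hcyc).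
Qed.
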